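(* Let $\xi\in\mathcal N_{\rm pol}$ with $0\in\xi$, and let $\ell>0$. Suppose $\xi\cap K_\ell(z)\ne\emptyset$ for every $z\in I$. Then $D(0|\xi)\subset B_{6\ell d^2}(0)$.
   Context: $\mathcal N$ is the set of locally finite subsets of $\mathbb R^d$; for $x\in\xi$, $\mathrm{Vor}(x|\xi)=\{y:|y-x|\le|y-z|\ \forall z\in\xi\}$; $\mathcal N_{\rm pol}$ is the set of $\xi\in\mathcal N$ all of whose Voronoi cells are convex polytopes. For $\xi\in\mathcal N_{\rm pol}$ and $x\in\xi$, the fundamental region $D(x|\xi)$ is the union of the closed balls centered at $v$ with radius $|v-x|$, as $v$ ranges over the vertices of $\mathrm{Vor}(x|\xi)$. $B_r(0)$ is the closed Euclidean ball of radius $r$ centered at $0$. $I:=\{z\in\mathbb Z^d:|z|_\infty=d\}$ and $K_\ell(z):=z\ell+[-\ell/2,\ell/2]^d$. *)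

From HB Require Import structures.
From mathcomp Require Import all_boot all_order all_algebra.
From mathcomp Require Import classical_sets cardinality reals.
Set Implicit Arguments. Unset Strict Implicit. Unset Printing Implicit Defensive.
Import Order.TTheory GRing.Theory Num.Theory.
Local Open Scope ring_scope.
Local Open Scope classical_set_scope.

Section Defs.
Variables (R : realType) (d : nat).
Notation pt := 'rV[R]_d.

Definition enorm (x : pt) : R := Num.sqrt (\sum_(i < d) (x ord0 i) ^+ 2).
Definition edist (x y : pt) : R := enorm (x - y).

Definition ball0 (r : R) : set pt := [set y | enorm y <= r].

Definition locally_finite (xi : set pt) : Prop :=
  forall r : R, finite_set (xi `&` ball0 r).

Definition Vor (x : pt) (xi : set pt) : set pt :=
  [set y | forall z, xi z -> edist y x <= edist y z].

Definition is_polytope (C : set pt) : Prop :=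
  exists s : seq pt, C = [set y | exists w : 'I_(size s) -> R,
     [/\ (forall i, 0 <= w i), \sum_i w i = 1 & y = \sum_i w i *: s`_i]].

Definition is_vertex (C : set pt) (v : pt) : Prop :=
  C v /\ forall a b t, C a -> C b -> 0 < t -> t < 1 ->
    v = (1 - t) *: a + t *: b -> a = b.

Definition Npol (xi : set pt) : Prop :=
  locally_finite xi /\ forall x, xi x -> is_polytope (Vor x xi).

Definition fund_region (x : pt) (xi : set pt) : set pt :=
  [set y | exists v, is_vertex (Vor x xi) v /\ edist y v <= edist v x].

Definition supnormZ (z : 'rV[int]_d) : nat := (\max_(i < d) `|z ord0 i|%N)%N.
Definition Iset : set 'rV[int]_d := [set z | supnormZ z = d].

Definition cube (l : R) (z : 'rV[int]_d) : set pt :=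
  [set y | forall i, `|y ord0 i - (z ord0 i)%:~R * l| <= l / 2].
End Defs.

(** The argument only uses that a vertex [v] of [Vor(0|xi)] lies in the cell:
   [|v| <= |v - y|] for every [y] in [xi], i.e. [2 <v, y> <= |y|^2].  Take for [y]
   a point of [xi] in the cube [K_l(z)] whose centre [z l] lies in the orthant of
   [v], with [z = (+-d, ..., +-d)] in [I].  Then [<v, y> >= l (d - 1/2) |v|_1]
   while [|y|^2 <= d l^2 (d + 1/2)^2], whence [|v|_1 <= 3 l d^2].  Finally
   [|v| <= |v|_1], and every [w] in the ball of radius [|v|] around [v] has
   [|w| <= 2 |v| <= 6 l d^2]. *)
From HB Require Import structures.
From mathcomp Require Import all_boot all_order all_algebra.
From mathcomp Require Import classical_sets cardinality reals.
From mathcomp Require Import ring lra.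
Import Order.TTheory GRing.Theory Num.Theory.
Local Open Scope ring_scope.
Local Open Scope classical_set_scope.

Set Implicit Arguments. Unset Strict Implicit. Unset Printing Implicit Defensive.

Section VoronoiCellBound.
Variables (R : realType) (d : nat).
Notation pt := 'rV[R]_d.

Definition sqnorm (x : pt) : R := \sum_(i < d) (x ord0 i) ^+ 2.
Definition dot (x y : pt) : R := \sum_(i < d) x ord0 i * y ord0 i.
Definition norm1 (x : pt) : R := \sum_(i < d) `|x ord0 i|.

Lemma sqnorm_ge0 (x : pt) : 0 <= sqnorm x.
Proof. by apply: sumr_ge0 => i _; rewrite sqr_ge0. Qed.

Lemma norm1_ge0 (x : pt) : 0 <= norm1 x.
Proof. by apply: sumr_ge0 => i _; rewrite normr_ge0. Qed.

Lemma ler_enorm (x y : pt) : (enorm x <= enorm y) = (sqnorm x <= sqnorm y).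
Proof. exact/ler_sqrt/sqnorm_ge0. Qed.

Lemma enorm_le (x : pt) (r : R) : 0 <= r -> sqnorm x <= r ^+ 2 -> enorm x <= r.
Proof.
by move=> r_ge0 x_le; rewrite -(ger0_norm r_ge0) -sqrtr_sqr ler_sqrt ?sqr_ge0.
Qed.

Lemma sqnormB (x y : pt) : sqnorm (x - y) = sqnorm x - 2 * dot x y + sqnorm y.
Proof.
rewrite /sqnorm /dot mulr_sumr -sumrB -big_split /=.
by apply: eq_bigr => i _; rewrite !mxE; ring.
Qed.

Lemma sqnorm_le_norm1 (x : pt) : sqnorm x <= norm1 x ^+ 2.
Proof.
rewrite expr2 /sqnorm {2}/norm1 mulr_sumr; apply: ler_sum => i _.
rewrite -real_normK ?num_real // expr2 ler_wpM2r ?normr_ge0 //.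
by rewrite /norm1 (bigD1 i) //= lerDl sumr_ge0 // => j _; rewrite normr_ge0.
Qed.

Lemma sqnorm_le_const (x : pt) (a : R) :
  (forall i, `|x ord0 i| <= a) -> sqnorm x <= d%:R * a ^+ 2.
Proof.
move=> x_le; rewrite /sqnorm mulr_natl -[X in _ *+ X]card_ord -sumr_const.
apply: ler_sum => i _; rewrite -real_normK ?num_real // lerXn2r ?nnegrE //.
exact: le_trans (normr_ge0 _) (x_le i).
Qed.

Lemma sqnorm_le_of_edist (w v : pt) : edist w v <= edist v 0 -> sqnorm w <= 4 * sqnorm v.
Proof.
rewrite /edist subr0 ler_enorm => wv_le.
apply: le_trans (_ : 2 * sqnorm (w - v) + 2 * sqnorm v <= _); last by lra.
rewrite /sqnorm !mulr_sumr -big_split /=; apply: ler_sum => i _.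
by rewrite !mxE; have := sqr_ge0 (w ord0 i - 2 * v ord0 i); nra.
Qed.

Lemma Vor0_dot (xi : set pt) (v y : pt) : Vor 0 xi v -> xi y -> 2 * dot v y <= sqnorm y.
Proof.
move=> /(_ y) vor xi_y; have := vor xi_y.
by rewrite /edist subr0 ler_enorm sqnormB; lra.
Qed.

Definition orthant_corner (v : pt) : 'rV[int]_d :=
  \row_i (if 0 <= v ord0 i then d%:Z else - d%:Z).

Lemma orthant_corner_Iset (v : pt) : Iset (orthant_corner v).
Proof.
rewrite /Iset /supnormZ /=.
under eq_bigr do rewrite mxE (fun_if (fun n : int => `|n|%N)) abszN if_same.
apply/eqP; rewrite eqn_leq; apply/andP; split; first exact/bigmax_leqP.
have [d0 | d_gt0] := posnP d; first by rewrite {1}d0.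
exact: (leq_bigmax (Ordinal d_gt0)).
Qed.

Variable l : R.
Hypothesis l_gt0 : 0 < l.

Lemma dot_cube_corner (v y : pt) :
  cube l (orthant_corner v) y -> l * (2 * d%:R - 1) * norm1 v <= 2 * dot v y.
Proof.
move=> y_cube; rewrite /norm1 /dot !mulr_sumr; apply: ler_sum => i _.
have := y_cube i; rewrite mxE; case: ifP => v_sgn; rewrite ?mulrNz -?pmulrn ler_norml.
- by rewrite ger0_norm // => /andP[]; nra.
- by rewrite ltr0_norm ?ltNge ?v_sgn // => /andP[]; nra.
Qed.

Lemma sqnorm_cube_corner (v y : pt) :
  cube l (orthant_corner v) y -> sqnorm y <= d%:R * (l * (d%:R + 1 / 2)) ^+ 2.
Proof.
move=> y_cube; apply: sqnorm_le_const => i; have := y_cube i; rewrite mxE.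
have dl_ge0 : 0 <= d%:R * l by rewrite mulr_ge0 ?ler0n ?ltW.
by case: ifP => _; rewrite ?mulrNz -?pmulrn !ler_norml => /andP[] *; apply/andP; split; lra.
Qed.

Lemma Vor0_norm1_le (xi : set pt) (v y : pt) :
  Vor 0 xi v -> xi y -> cube l (orthant_corner v) y -> norm1 v <= 3 * l * d%:R ^+ 2.
Proof.
move=> vor xi_y y_cube; have [d0 | d_gt0] := posnP d.
  rewrite /norm1; move: v {vor y_cube}; rewrite d0 => v.
  by rewrite big_ord0 mulr_ge0 ?sqr_ge0 ?mulr_ge0 ?ltW.
have S_le := le_trans (dot_cube_corner y_cube)
  (le_trans (Vor0_dot vor xi_y) (sqnorm_cube_corner y_cube)).
have D_ge1 : (1 : R) <= d%:R by rewrite ler1n.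
set D : R := d%:R in S_le D_ge1 *; set S := norm1 v in S_le *.
have S_le1 : (2 * D - 1) * S <= D * l * (D + 1 / 2) ^+ 2.
  rewrite -(ler_pM2l l_gt0) mulrA; apply: le_trans S_le _.
  by have -> : l * (D * l * (D + 1 / 2) ^+ 2) = D * (l * (D + 1 / 2)) ^+ 2 by ring.
have S_le2 : D * l * (D + 1 / 2) ^+ 2 <= (2 * D - 1) * (3 * l * D ^+ 2).
  rewrite -subr_ge0.
  have -> : (2 * D - 1) * (3 * l * D ^+ 2) - D * l * (D + 1 / 2) ^+ 2
          = l * D * (5 * D ^+ 2 - 4 * D - 1 / 4) by field.
  by rewrite !mulr_ge0 ?ltW //; [lra | nra].
by rewrite -(ler_pM2l (_ : 0 < 2 * D - 1)) ?(le_trans S_le1 S_le2) //; lra.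
Qed.

End VoronoiCellBound.

Theorem lemma9p3 (R : realType) (d : nat) (xi : set 'rV[R]_d) (l : R) :
  Npol xi -> xi 0 -> 0 < l ->
  (forall z, Iset z -> exists y, xi y /\ cube l z y) ->
  fund_region 0 xi `<=` ball0 (6 * l * (d%:R ^+ 2)).
Proof.
move=> _ _ l_gt0 hit w [v [[vor _] wv_le]].
have [y [xi_y y_cube]] := hit _ (orthant_corner_Iset v).
have v_le := Vor0_norm1_le l_gt0 vor xi_y y_cube.
apply: enorm_le; first by rewrite !mulr_ge0 ?sqr_ge0 // ltW.
apply: le_trans (sqnorm_le_of_edist wv_le) _.
apply: le_trans (_ : 4 * norm1 v ^+ 2 <= _).
  by rewrite ler_pM2l ?sqnorm_le_norm1.
have := norm1_ge0 v; nra.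
Qed.
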